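(* Let $\mathbb K$ be a field with $2\in\mathbb K^\times$, $A$ a unital commutative associative $\mathbb K$-algebra, $\mathfrak k$ a $\mathbb K$-Lie algebra, $\mathfrak g=A\otimes\mathfrak k$ and $\mathfrak z$ a vector space. For $i\in\{1,2,3\}$ and a linear map $f_i$ on the $i$-th summand, $f=f_i\circ p_i$ is a 2-cocycle if and only if: ($i=1$) every $\tilde f_1(a,b)$ is an invariant symmetric bilinear map $\mathfrak k\times\mathfrak k\to\mathfrak z$, and the induced alternating map $A\times A\to\mathrm{Lin}(\mathfrak k\vee\mathfrak k',\mathfrak z)^{\mathfrak k}$, $(a,b)\mapsto\tilde f_1(a,b)|_{\mathfrak k\vee\mathfrak k'}$, is a cyclic 1-cocycle; ($i=2$) $\tilde f_2(A)\subseteq Z^2(\mathfrak k,\mathfrak z)$; ($i=3$) $\tilde f_3(c)(x,y)=0$ for all $c\in I_A$, $x\in\mathfrak k$, $y\in\mathfrak k'$.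
   Context: $\mathfrak g$ has bracket $[a\otimes x,a'\otimes x']=aa'\otimes[x,x']$, $ax=a\otimes x$, unit $\mathbf 1$, $\mathfrak k'=[\mathfrak k,\mathfrak k]$. $v\wedge w=\tfrac12(v\otimes w-w\otimes v)$, $v\vee w=\tfrac12(v\otimes w+w\otimes v)$. $I_A$ is the kernel of multiplication $S^2(A)\to A$. The $i$-th summands are $\Lambda^2(A)\otimes S^2(\mathfrak k)$, $A\otimes\Lambda^2(\mathfrak k)$, $I_A\otimes\Lambda^2(\mathfrak k)$, with projections $p_1(ax\wedge by)=a\wedge b\otimes x\vee y$, $p_2(ax\wedge by)=ab\otimes x\wedge y$, $p_3(ax\wedge by)=(a\vee b-ab\vee\mathbf 1)\otimes x\wedge y$ (together an isomorphism from $\Lambda^2(\mathfrak g)$ onto the direct sum). A 2-cocycle is a linear map on $\Lambda^2(\mathfrak g)$ vanishing on the span of $[u,v]\wedge w+[v,w]\wedge u+[w,u]\wedge v$. $\tilde f_1(a,b)(x,y)=f_1(a\wedge b\otimes x\vee y)$, $\tilde f_2(a)(x,y)=f_2(a\otimes x\wedge y)$, $\tilde f_3(c)(x,y)=f_3(c\otimes x\wedge y)$. Invariance: $\kappa([x,y],z)=\kappa(x,[y,z])$. $\mathfrak k\vee\mathfrak k'$ is the span of $x\vee y$, $x\in\mathfrak k$, $y\in\mathfrak k'$; $\mathrm{Lin}(\mathfrak k\vee\mathfrak k',\mathfrak z)^{\mathfrak k}$ the $\mathfrak k$-invariant linear maps on it. A cyclic 1-cocycle is an alternating bilinear $\phi$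 on $A$ with $\phi(a,bc)+\phi(b,ca)+\phi(c,ab)=0$. $Z^2(\mathfrak k,\mathfrak z)$ is the space of alternating bilinear $\eta:\mathfrak k\times\mathfrak k\to\mathfrak z$ with $\eta([x,y],z)+\eta([y,z],x)+\eta([z,x],y)=0$. *)

From HB Require Import structures.
From mathcomp Require Import all_boot all_order all_algebra.
Set Implicit Arguments. Unset Strict Implicit. Unset Printing Implicit Defensive.
Import Order.TTheory GRing.Theory Num.Theory.
Local Open Scope ring_scope.

Section Defs.
Variable K : fieldType.

Definition bilin (U V W : lmodType K) (h : U -> V -> W) : Prop :=
  (forall u, linear (h u)) /\ (forall v, linear (fun u => h u v)).

Definition in_span (V : lmodType K) (S : V -> Prop) (x : V) : Prop :=
  exists (n : nat) (c : 'I_n -> K) (e : 'I_n -> V),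
    (forall i, S (e i)) /\ x = \sum_(i < n) c i *: e i.

Definition is_tensor (U V T : lmodType K) (t : U -> V -> T) : Prop :=
  bilin t /\
  forall (W : lmodType K) (h : U -> V -> W), bilin h ->
    exists! phi : T -> W, linear phi /\ forall u v, phi (t u v) = h u v.

Definition is_ext_square (U E : lmodType K) (w : U -> U -> E) : Prop :=
  bilin w /\ (forall u v, w u v = - w v u) /\
  forall (W : lmodType K) (h : U -> U -> W), bilin h ->
    (forall u v, h u v = - h v u) ->
    exists! phi : E -> W, linear phi /\ forall u v, phi (w u v) = h u v.

Definition is_sym_square (U S : lmodType K) (s : U -> U -> S) : Prop :=
  bilin s /\ (forall u v, s u v = s v u) /\
  forall (W : lmodType K) (h : U -> U -> W), bilin h ->
    (forall u v, h u v = h v u) ->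
    exists! phi : S -> W, linear phi /\ forall u v, phi (s u v) = h u v.

Definition is_lie_bracket (L : lmodType K) (br : L -> L -> L) : Prop :=
  bilin br /\ (forall x, br x x = 0) /\
  (forall x y z, br x (br y z) + br y (br z x) + br z (br x y) = 0).

Definition derived (L : lmodType K) (br : L -> L -> L) (y : L) : Prop :=
  in_span (fun e => exists x x', e = br x x') y.

Definition lie_invariant (L Z : lmodType K) (br : L -> L -> L) (kappa : L -> L -> Z) :=
  forall x y z, kappa (br x y) z = kappa x (br y z).

Definition Z2 (L Z : lmodType K) (br : L -> L -> L) (eta : L -> L -> Z) : Prop :=
  bilin eta /\ (forall x y, eta x y = - eta y x) /\
  (forall x y z, eta (br x y) z + eta (br y z) x + eta (br z x) y = 0).

Definition is_2cocycle (G E Z : lmodType K) (brG : G -> G -> G)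
    (wg : G -> G -> E) (f : E -> Z) : Prop :=
  linear f /\
  forall e, in_span (fun e' => exists u v w,
      e' = wg (brG u v) w + wg (brG v w) u + wg (brG w u) v) e -> f e = 0.

(** Cyclic 1-cocycle  phi : A x A -> Lin(P, z), where the values
    [phi a b : V -> Z] are compared as maps restricted to the subspace [P]
    (two linear maps on a subspace agree iff they agree on its elements). *)
Definition cyclic_1cocycle_on (A : comAlgType K) (V Z : lmodType K)
    (P : V -> Prop) (phi : A -> A -> V -> Z) : Prop :=
  (forall (c : K) a a' b s, P s ->
      phi (c *: a + a') b s = c *: phi a b s + phi a' b s) /\
  (forall (c : K) a b b' s, P s ->
      phi a (c *: b + b') s = c *: phi a b s + phi a b' s) /\
  (forall a b s, P s -> phi a b s = - phi b a s) /\
  (forall a b c s, P s -> phi a (b * c) s + phi b (c * a) s + phi c (a * b) s = 0).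

End Defs.

From HB Require Import structures.
From mathcomp Require Import all_boot all_order all_algebra.
Import GRing.Theory.
Local Open Scope ring_scope.
Set Implicit Arguments. Unset Strict Implicit.

(* The Jacobi element J(u,v,w) = [u,v]∧w + [v,w]∧u + [w,u]∧v is trilinear and
   cyclically symmetric, so a linear f on Λ²(g) is a 2-cocycle iff it kills
   every J(ax, by, cz), and p_i maps that element to an explicit sum of three
   terms.  For i = 2 the condition is the cocycle identity of f̃_2(abc).  For
   i = 1 it reads f̃_1(ab,c)([x,y],z) + f̃_1(bc,a)([y,z],x) + f̃_1(ca,b)([z,x],y)
   = 0; its instances with c = 1 and a, b exchanged give invariance of f̃_1
   (here 2 must be invertible), after which all three terms are values at
   z ∨ [x,y] and the identity becomes the cyclic cocycle condition.  For i = 3,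
   c = 1 kills one term since ab∨1 - ab∨1 = 0, the cyclic symmetry of the other
   two forces f̃_3(a∨b - ab∨1)([x,y],z) = 0, and these elements span I_A. *)

Section LinearMaps.
Variable K : fieldType.

Section OneMap.
Variables (U V : lmodType K) (f : U -> V).
Hypothesis f_lin : linear f.

Lemma linD : {morph f : u v / u + v}.
Proof. exact: (GRing.semilinear_linear f_lin).2. Qed.

Lemma linZ : scalable f.
Proof. exact: scalable_linear. Qed.

Lemma linB : {morph f : u v / u - v}.
Proof. exact: zmod_morphism_linear. Qed.

Lemma lin0 : f 0 = 0.
Proof. by rewrite -(subrr 0) linB subrr. Qed.

Lemma linN : {morph f : u / - u}.
Proof. by move=> u; rewrite -sub0r linB lin0 sub0r. Qed.

Lemma lin_span0 (S : U -> Prop) :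
  (forall e, S e -> f e = 0) -> forall x, in_span S x -> f x = 0.
Proof.
move=> fS0 x [n [c [e [Se ->]]]].
elim: n c e Se => [|n IHn] c e Se; first by rewrite big_ord0 lin0.
rewrite big_ord_recr /= linD linZ (fS0 _ (Se ord_max)) scaler0 addr0.
exact: (IHn (fun i => c (widen_ord (leqnSn n) i)) (fun i => e (widen_ord (leqnSn n) i))).
Qed.

End OneMap.

Lemma in_span1 (U : lmodType K) (S : U -> Prop) x : S x -> in_span S x.
Proof.
move=> Sx; exists 1%N, (fun=> 1), (fun=> x); split=> //.
by rewrite big_ord1 scale1r.
Qed.

Lemma lin_comp (U V W : lmodType K) (f : U -> V) (g : V -> W) :
  linear f -> linear g -> linear (fun u => g (f u)).
Proof. by move=> f_lin g_lin a u v; rewrite f_lin g_lin. Qed.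

Lemma lin_add (U V : lmodType K) (f g : U -> V) :
  linear f -> linear g -> linear (fun u => f u + g u).
Proof.
move=> f_lin g_lin a u v; rewrite f_lin g_lin scalerDr.
by rewrite -!addrA; congr (_ + _); rewrite addrCA.
Qed.

Lemma lin_cst0 (U V : lmodType K) : linear (fun _ : U => 0 : V).
Proof. by move=> a u v; rewrite scaler0 addr0. Qed.

Lemma bilin_cst0 (U V W : lmodType K) : bilin (fun (_ : U) (_ : V) => 0 : W).
Proof. by split=> ? a ? ?; rewrite scaler0 addr0. Qed.

Lemma bilin_comp (U V W X : lmodType K) (h : U -> V -> W) (g : W -> X) :
  bilin h -> linear g -> bilin (fun u v => g (h u v)).
Proof.
move=> [hl hr] g_lin; split=> [u | v].
  exact: lin_comp (hl u) g_lin.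
exact: lin_comp (hr v) g_lin.
Qed.

Lemma unique_linear_eq0 (U V : lmodType K) (P : (U -> V) -> Prop) (phi : U -> V) :
  (exists! psi, linear psi /\ P psi) -> P (fun=> 0) ->
  linear phi -> P phi -> forall x, phi x = 0.
Proof.
move=> [psi [_ psi_uniq]] P0 phi_lin Pphi x.
by rewrite -(psi_uniq _ (conj phi_lin Pphi)) (psi_uniq _ (conj (@lin_cst0 U V) P0)).
Qed.

End LinearMaps.

Section UniversalProperties.
Variables (K : fieldType) (U V T W : lmodType K).

Lemma tensor_lin_eq0 (t : U -> V -> T) (phi : T -> W) :
  is_tensor t -> linear phi -> (forall u v, phi (t u v) = 0) -> forall x, phi x = 0.
Proof.
move=> [_ univ] phi_lin phi_t.
exact: (unique_linear_eq0 (univ W _ (bilin_cst0 _ _ _)) (fun _ _ => erefl) phi_lin phi_t).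
Qed.

Lemma sym_square_lin_eq0 (s : U -> U -> T) (phi : T -> W) :
  is_sym_square s -> linear phi -> (forall u v, phi (s u v) = 0) -> forall x, phi x = 0.
Proof.
move=> [_ [_ univ]] phi_lin phi_s.
exact: (unique_linear_eq0 (univ W _ (bilin_cst0 _ _ _) (fun _ _ => erefl))
  (fun _ _ => erefl) phi_lin phi_s).
Qed.

End UniversalProperties.

Section CharNot2.
Variables (K : fieldType) (Z : lmodType K).
Hypothesis two_neq0 : (2 : K) != 0.

Lemma double_eq0 (X : Z) : X + X = 0 -> X = 0.
Proof.
move=> XX0; rewrite -[X]scale1r -(mulVf two_neq0) -scalerA.
by rewrite scaler_nat (mulr2n X) XX0 scaler0.
Qed.

Lemma pair_sums_eq0 (X Y W : Z) : X + Y = 0 -> Y + W = 0 -> W + X = 0 -> X = 0.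
Proof.
move=> XY YW WX; apply: double_eq0.
have XW : X = W by apply: (addIr Y); rewrite XY addrC YW.
by rewrite {1}XW.
Qed.

Lemma add_sub_eq0 (X D : Z) : X + D = 0 -> X - D = 0 -> D = 0.
Proof.
by move=> XD /subr0_eq XeD; apply: double_eq0; rewrite -{1}XeD.
Qed.

End CharNot2.

Section LieForms.
Variables (K : fieldType) (L W : lmodType K) (br : L -> L -> L).

Lemma derived_br x y : derived br (br x y).
Proof. by apply: in_span1; exists x, y. Qed.

Lemma derived_lin_eq0 (phi : L -> W) : linear phi ->
  (forall u v, phi (br u v) = 0) -> forall y, derived br y -> phi y = 0.
Proof. by move=> phi_lin phi_br; apply: lin_span0 => // _ [u [v ->]]. Qed.

Lemma sym_lie_invariantP (kappa : L -> L -> W) :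
  (forall x y, kappa x y = kappa y x) ->
  lie_invariant br kappa <-> forall x y z, kappa (br x y) z = kappa (br y z) x.
Proof. by move=> kappaC; split=> inv x y z; rewrite inv kappaC. Qed.

End LieForms.

Section Cocycles.
Variables (K : fieldType) (G E Z : lmodType K).
Variables (brG : G -> G -> G) (wg : G -> G -> E).

Definition jacobi u v w := wg (brG u v) w + wg (brG v w) u + wg (brG w u) v.

Lemma jacobi_rot u v w : jacobi u v w = jacobi v w u.
Proof. by rewrite /jacobi [RHS]addrC addrA. Qed.

Lemma cocycle_jacobi (f : E -> Z) :
  is_2cocycle brG wg f -> forall u v w, f (jacobi u v w) = 0.
Proof. by move=> [_ f0] u v w; apply: f0; apply: in_span1; exists u, v, w. Qed.

Hypotheses (brG_bilin : bilin brG) (wg_bilin : bilin wg).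

Lemma lin_jacobi (f : E -> Z) v w : linear f -> linear (fun u => f (jacobi u v w)).
Proof.
move: brG_bilin wg_bilin => [brGl brGr] [wgl wgr] f_lin; apply: lin_comp f_lin.
apply: lin_add; first apply: lin_add.
- exact: lin_comp (brGr v) (wgr w).
- exact: wgl.
- exact: lin_comp (brGl w) (wgr v).
Qed.

(* The Jacobi elements are trilinear and cyclically symmetric, so it suffices
   to test them on pure tensors in each slot in turn. *)
Lemma cocycle_tensorP (A k : lmodType K) (tg : A -> k -> G) (f : E -> Z) :
  is_tensor tg -> linear f ->
  is_2cocycle brG wg f <->
  forall a x b y c z, f (jacobi (tg a x) (tg b y) (tg c z)) = 0.
Proof.
move=> tg_tensor f_lin; split=> [cocycle a x b y c z | f_jacobi].
  exact: cocycle_jacobi.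
have first_slot v w : (forall a x, f (jacobi (tg a x) v w) = 0) ->
    forall u, f (jacobi u v w) = 0.
  by move=> f_tg; apply: tensor_lin_eq0 tg_tensor (lin_jacobi v w f_lin) f_tg.
have f_jacobi_all u v w : f (jacobi u v w) = 0.
  apply: (first_slot) => a x; rewrite -jacobi_rot.
  apply: (first_slot) => c z; rewrite -jacobi_rot.
  by apply: (first_slot) => b y; rewrite -jacobi_rot.
split=> //; apply: (lin_span0 f_lin) => _ [u [v [w ->]]].
exact: f_jacobi_all.
Qed.

End Cocycles.

Section CurrentAlgebra.
Variables (K : fieldType) (A : comAlgType K) (k Z : lmodType K) (br : k -> k -> k).
Variables (G : lmodType K) (tg : A -> k -> G) (brG : G -> G -> G).
Hypotheses (tg_tensor : is_tensor tg) (brG_bilin : bilin brG).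
Hypothesis brG_tg : forall a x b y, brG (tg a x) (tg b y) = tg (a * b) (br x y).
Variables (E : lmodType K) (wg : G -> G -> E).
Hypothesis wg_ext : is_ext_square wg.

Local Notation jacobi_at a x b y c z := (jacobi brG wg (tg a x) (tg b y) (tg c z)).

Lemma jacobi_tg a x b y c z :
  jacobi_at a x b y c z =
  wg (tg (a * b) (br x y)) (tg c z) + wg (tg (b * c) (br y z)) (tg a x)
  + wg (tg (c * a) (br z x)) (tg b y).
Proof. by rewrite /jacobi !brG_tg. Qed.

Lemma cocycle_currentP (f : E -> Z) : linear f ->
  is_2cocycle brG wg f <->
  forall a x b y c z, f (jacobi_at a x b y c z) = 0.
Proof. exact: (cocycle_tensorP brG_bilin wg_ext.1 tg_tensor). Qed.

Section SecondSummand.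
Variables (Lk : lmodType K) (wk : k -> k -> Lk).
Variables (T2 : lmodType K) (t2 : A -> Lk -> T2) (p2 : E -> T2).
Hypotheses (wk_ext : is_ext_square wk) (t2_tensor : is_tensor t2) (p2_lin : linear p2).
Hypothesis p2_tg : forall a x b y, p2 (wg (tg a x) (tg b y)) = t2 (a * b) (wk x y).
Variables (f2 : T2 -> Z).
Hypothesis f2_lin : linear f2.

Local Notation eta a x y := (f2 (t2 a (wk x y))).

Lemma jacobi_second a x b y c z :
  f2 (p2 (jacobi_at a x b y c z)) =
  eta (a * b * c) (br x y) z + eta (a * b * c) (br y z) x + eta (a * b * c) (br z x) y.
Proof.
rewrite jacobi_tg !(linD p2_lin) !p2_tg !(linD f2_lin).
by rewrite [b * c * a]mulrC mulrA [c * a]mulrC (mulrAC a c b).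
Qed.

Lemma cocycle_second_summandP :
  is_2cocycle brG wg (fun e => f2 (p2 e)) <-> forall a, Z2 br (fun x y => eta a x y).
Proof.
apply: (iff_trans (cocycle_currentP (lin_comp p2_lin f2_lin))).
split=> [jacobi0 a | eta_cocycle a x b y c z].
  split; first exact: bilin_comp wk_ext.1 (lin_comp (t2_tensor.1.1 a) f2_lin).
  split=> [x y | x y z]; first by rewrite wk_ext.2.1 (linN (t2_tensor.1.1 a)) (linN f2_lin).
  by have := jacobi0 a x 1 y 1 z; rewrite jacobi_second !mulr1.
by rewrite jacobi_second; apply: (eta_cocycle _).2.2.
Qed.

End SecondSummand.

Section FirstSummand.
Hypothesis two_neq0 : (2 : K) != 0.
Variables (LA : lmodType K) (wA : A -> A -> LA) (Sk : lmodType K) (sk : k -> k -> Sk).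
Variables (T1 : lmodType K) (t1 : LA -> Sk -> T1) (p1 : E -> T1).
Hypotheses (wA_ext : is_ext_square wA) (sk_sym : is_sym_square sk).
Hypotheses (t1_tensor : is_tensor t1) (p1_lin : linear p1).
Hypothesis p1_tg : forall a x b y, p1 (wg (tg a x) (tg b y)) = t1 (wA a b) (sk x y).
Variables (f1 : T1 -> Z).
Hypothesis f1_lin : linear f1.

Local Notation phi a b s := (f1 (t1 (wA a b) s)).
Local Notation kappa a b x y := (phi a b (sk x y)).
Local Notation cyclic_sum a b c s := (phi a (b * c) s + phi b (c * a) s + phi c (a * b) s).
Local Notation kappa_rot :=
  (forall a b x y z, kappa a b (br x y) z = kappa a b (br y z) x).
Lemma phi_lin a b : linear (fun s => phi a b s).
Proof. exact: lin_comp (t1_tensor.1.1 _) f1_lin. Qed.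

Lemma cyclic_sum_lin a b c : linear (fun s => cyclic_sum a b c s).
Proof. by apply: lin_add; first apply: lin_add; apply: phi_lin. Qed.

Lemma phiC a b s : phi b a s = - phi a b s.
Proof. by rewrite wA_ext.2.1 (linN (t1_tensor.1.2 s)) (linN f1_lin). Qed.

Lemma kappaC a b x y : kappa a b x y = kappa a b y x.
Proof. by rewrite sk_sym.2.1. Qed.

Lemma jacobi_first a x b y c z :
  f1 (p1 (jacobi_at a x b y c z)) =
  kappa (a * b) c (br x y) z + kappa (b * c) a (br y z) x + kappa (c * a) b (br z x) y.
Proof. by rewrite jacobi_tg !(linD p1_lin) !p1_tg !(linD f1_lin). Qed.

Lemma jacobi_first_rot : kappa_rot ->
  forall a x b y c z, f1 (p1 (jacobi_at a x b y c z)) = - cyclic_sum a b c (sk z (br x y)).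
Proof.
move=> rot a x b y c z.
rewrite jacobi_first -(rot (b * c) a x y z) (rot (c * a) b z x y).
rewrite !(kappaC _ _ (br x y) z) (phiC c) (phiC a) (phiC b) -!opprD.
by rewrite (addrC (phi c _ _)) addrAC.
Qed.

(* Put [c = 1] and exchange [a] and [b]: the two Jacobi identities differ
   exactly by twice the defect of the rotation identity. *)
Lemma jacobi0_kappa_rot :
  (forall a x b y c z, f1 (p1 (jacobi_at a x b y c z)) = 0) -> kappa_rot.
Proof.
move=> jacobi0 a b x y z.
have := jacobi0 a z b x 1 y; have := jacobi0 b z a x 1 y.
rewrite !jacobi_first !mulr1 !mul1r [b * a]mulrC !(phiC a b) => J2 J1.
apply/esym/subr0_eq/(add_sub_eq0 two_neq0 (X := kappa (a * b) 1 (br z x) y)).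
  by rewrite addrA addrAC.
by rewrite opprB addrA.
Qed.

Lemma cyclic_1cocycle_firstP :
  cyclic_1cocycle_on (in_span (fun s => exists x y, derived br y /\ s = sk x y))
    (fun a b s => phi a b s) <->
  forall a b c x y z, cyclic_sum a b c (sk z (br x y)) = 0.
Proof.
split=> [[_ [_ [_ cyc0]]] a b c x y z | cyc0].
  apply: cyc0; apply: in_span1; exists z, (br x y); split=> //; exact: derived_br.
split=> [r a a' b s _|].
  exact: (lin_comp (wA_ext.1.2 b) (lin_comp (t1_tensor.1.2 s) f1_lin) r a a').
split=> [r a b b' s _|].
  exact: (lin_comp (wA_ext.1.1 a) (lin_comp (t1_tensor.1.2 s) f1_lin) r b b').
split=> [a b s _|a b c]; first by rewrite (phiC a b) opprK.
apply: (lin_span0 (cyclic_sum_lin a b c)) => _ [z [y [y_derived ->]]].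
exact: (derived_lin_eq0 (lin_comp (sk_sym.1.1 z) (cyclic_sum_lin a b c))
  (fun u v => cyc0 a b c u v z) y_derived).
Qed.

Lemma cocycle_first_summandP :
  is_2cocycle brG wg (fun e => f1 (p1 e)) <->
  ((forall a b,
      bilin (fun x y => kappa a b x y) /\
      (forall x y, kappa a b x y = kappa a b y x) /\
      lie_invariant br (fun x y => kappa a b x y)) /\
   cyclic_1cocycle_on (in_span (fun s => exists x y, derived br y /\ s = sk x y))
     (fun a b s => phi a b s)).
Proof.
apply: (iff_trans (cocycle_currentP (lin_comp p1_lin f1_lin))).
split=> [jacobi0 | [kappa_inv /cyclic_1cocycle_firstP cyc0] a x b y c z].
  have rot := jacobi0_kappa_rot jacobi0.
  split=> [a b|]; last first.
    apply/cyclic_1cocycle_firstP => a b c x y z.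
    by apply: oppr_inj; rewrite oppr0 -jacobi_first_rot.
  split; first exact: bilin_comp sk_sym.1 (phi_lin a b).
  by split; [exact: kappaC | apply/(sym_lie_invariantP _ (kappaC a b))].
rewrite jacobi_first_rot ?cyc0 ?oppr0 // => a' b' x' y' z'.
exact: (sym_lie_invariantP _ (kappaC a' b')).1 (kappa_inv a' b').2.2 x' y' z'.
Qed.

End FirstSummand.

Section ThirdSummand.
Hypothesis two_neq0 : (2 : K) != 0.
Variables (SA : lmodType K) (sA : A -> A -> SA) (mA : SA -> A).
Variables (IA : lmodType K) (iota : IA -> SA).
Hypotheses (sA_sym : is_sym_square sA) (mA_lin : linear mA).
Hypothesis mA_sA : forall a b, mA (sA a b) = a * b.
Hypotheses (iota_lin : linear iota) (iota_inj : injective iota).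
Hypothesis iota_ker : forall s, mA s = 0 <-> exists c, iota c = s.
Variables (Lk : lmodType K) (wk : k -> k -> Lk).
Variables (T3 : lmodType K) (t3 : IA -> Lk -> T3) (p3 : E -> T3).
Hypotheses (wk_ext : is_ext_square wk) (t3_tensor : is_tensor t3) (p3_lin : linear p3).
Hypothesis p3_tg : forall a x b y c, iota c = sA a b - sA (a * b) 1 ->
  p3 (wg (tg a x) (tg b y)) = t3 c (wk x y).
Variables (f3 : T3 -> Z).
Hypothesis f3_lin : linear f3.

Lemma projI_subproof s : exists c, iota c == s - sA (mA s) 1.
Proof.
have [c iota_c] : exists c, iota c = s - sA (mA s) 1.
  by apply/iota_ker; rewrite (linB mA_lin) mA_sA mulr1 subrr.
by exists c; apply/eqP.
Qed.

Definition projI s : IA := xchoose (projI_subproof s).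

Lemma projIE s : iota (projI s) = s - sA (mA s) 1.
Proof. exact/eqP/(xchooseP (projI_subproof s)). Qed.

Lemma projI_lin : linear projI.
Proof.
move=> r s s'; apply: iota_inj.
rewrite iota_lin !projIE mA_lin (sA_sym.1.2 1).
by rewrite scalerBr opprD addrACA.
Qed.

Lemma projI_iota c : projI (iota c) = c.
Proof.
apply: iota_inj; rewrite projIE.
have -> : mA (iota c) = 0 by apply/iota_ker; exists c.
by rewrite (lin0 (sA_sym.1.2 1)) subr0.
Qed.

Lemma projI_sA1 a : projI (sA a 1) = 0.
Proof. by apply: iota_inj; rewrite projIE mA_sA mulr1 subrr (lin0 iota_lin). Qed.

Local Notation lambda s x y z := (f3 (t3 (projI s) (wk (br x y) z))).

Lemma jacobi_third a x b y c z :
  f3 (p3 (jacobi_at a x b y c z)) =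
  lambda (sA (a * b) c) x y z + lambda (sA (b * c) a) y z x + lambda (sA (c * a) b) z x y.
Proof.
have p3_projI a' x' b' y' : p3 (wg (tg a' x') (tg b' y')) = t3 (projI (sA a' b')) (wk x' y').
  by apply: p3_tg; rewrite projIE mA_sA.
by rewrite jacobi_tg !(linD p3_lin) !p3_projI !(linD f3_lin).
Qed.

(* With [c = 1] the first term dies, since [ab v 1] has no [I_A]-component;
   the remaining two terms are the same [lambda] at cyclically rotated
   arguments. *)
Lemma jacobi0_lambda_eq0 :
  (forall a x b y c z, f3 (p3 (jacobi_at a x b y c z)) = 0) ->
  forall s x y z, lambda s x y z = 0.
Proof.
move=> jacobi0 s x y z.
have lambda_pair a b x' y' z' : lambda (sA a b) x' y' z' + lambda (sA a b) y' z' x' = 0.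
  have := jacobi0 a z' b x' 1 y'.
  rewrite jacobi_third mulr1 mul1r (sA_sym.2.1 b a) projI_sA1.
  by rewrite (lin0 (t3_tensor.1.2 _)) (lin0 f3_lin) add0r.
have lambda_sA a b : lambda (sA a b) x y z = 0.
  exact: (pair_sums_eq0 two_neq0 (lambda_pair a b x y z) (lambda_pair a b y z x)
    (lambda_pair a b z x y)).
exact: (sym_square_lin_eq0 sA_sym
  (lin_comp projI_lin (lin_comp (t3_tensor.1.2 _) f3_lin)) lambda_sA s).
Qed.

Lemma cocycle_third_summandP :
  is_2cocycle brG wg (fun e => f3 (p3 e)) <->
  forall c x y, derived br y -> f3 (t3 c (wk x y)) = 0.
Proof.
apply: (iff_trans (cocycle_currentP (lin_comp p3_lin f3_lin))).
have wkC c x y : f3 (t3 c (wk x y)) = - f3 (t3 c (wk y x)).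
  by rewrite wk_ext.2.1 (linN (t3_tensor.1.1 c)) (linN f3_lin).
split=> [jacobi0 c x | vanish a x b y c z].
  apply: (derived_lin_eq0 (lin_comp (wk_ext.1.1 x) (lin_comp (t3_tensor.1.1 c) f3_lin))).
  by move=> u v; rewrite wkC -(projI_iota c) jacobi0_lambda_eq0 ?oppr0.
rewrite jacobi_third !(wkC _ (br _ _)) !vanish ?oppr0 ?addr0 //; exact: derived_br.
Qed.

End ThirdSummand.

End CurrentAlgebra.

Theorem corollary3p3
  (K : fieldType) (two_unit : (2 : K) != 0)
  (A : comAlgType K)
  (k : lmodType K) (br : k -> k -> k) (Hk : is_lie_bracket br)
  (Z : lmodType K)
  (* g = A ⊗ k, with tg a x = a ⊗ x = ax, and its Lie bracket *)
  (G : lmodType K) (tg : A -> k -> G) (HG : is_tensor tg)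
  (brG : G -> G -> G) (HbrG1 : bilin brG)
  (HbrG2 : forall a x b y, brG (tg a x) (tg b y) = tg (a * b) (br x y))
  (* Λ²(g) *)
  (E : lmodType K) (wg : G -> G -> E) (HE : is_ext_square wg)
  (* Λ²(A), S²(k), Λ²(k), S²(A) *)
  (LA : lmodType K) (wA : A -> A -> LA) (HLA : is_ext_square wA)
  (Sk : lmodType K) (sk : k -> k -> Sk) (HSk : is_sym_square sk)
  (Lk : lmodType K) (wk : k -> k -> Lk) (HLk : is_ext_square wk)
  (SA : lmodType K) (sA : A -> A -> SA) (HSA : is_sym_square sA)
  (* I_A = kernel of the multiplication S²(A) -> A, embedded by iota *)
  (mA : SA -> A) (HmA1 : linear mA) (HmA2 : forall a b, mA (sA a b) = a * b)
  (IA : lmodType K) (iota : IA -> SA) (Hiota1 : linear iota)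
  (Hiota2 : injective iota) (Hiota3 : forall s, mA s = 0 <-> exists c, iota c = s)
  (* the three summands *)
  (T1 : lmodType K) (t1 : LA -> Sk -> T1) (HT1 : is_tensor t1)
  (T2 : lmodType K) (t2 : A -> Lk -> T2) (HT2 : is_tensor t2)
  (T3 : lmodType K) (t3 : IA -> Lk -> T3) (HT3 : is_tensor t3)
  (* the projections p_1, p_2, p_3 *)
  (p1 : E -> T1) (Hp1a : linear p1)
  (Hp1b : forall a x b y, p1 (wg (tg a x) (tg b y)) = t1 (wA a b) (sk x y))
  (p2 : E -> T2) (Hp2a : linear p2)
  (Hp2b : forall a x b y, p2 (wg (tg a x) (tg b y)) = t2 (a * b) (wk x y))
  (p3 : E -> T3) (Hp3a : linear p3)
  (Hp3b : forall a x b y c, iota c = sA a b - sA (a * b) 1 ->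
            p3 (wg (tg a x) (tg b y)) = t3 c (wk x y)) :
  (* i = 1 *)
  (forall f1 : T1 -> Z, linear f1 ->
     (is_2cocycle brG wg (fun e => f1 (p1 e)) <->
      ((forall a b,
          bilin (fun x y => f1 (t1 (wA a b) (sk x y))) /\
          (forall x y, f1 (t1 (wA a b) (sk x y)) = f1 (t1 (wA a b) (sk y x))) /\
          lie_invariant br (fun x y => f1 (t1 (wA a b) (sk x y)))) /\
       cyclic_1cocycle_on
         (in_span (fun s => exists x y, derived br y /\ s = sk x y))
         (fun a b (s : Sk) => f1 (t1 (wA a b) s))))) /\
  (* i = 2 *)
  (forall f2 : T2 -> Z, linear f2 ->
     (is_2cocycle brG wg (fun e => f2 (p2 e)) <->
      (forall a : A, Z2 br (fun x y => f2 (t2 a (wk x y)))))) /\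
  (* i = 3 *)
  (forall f3 : T3 -> Z, linear f3 ->
     (is_2cocycle brG wg (fun e => f3 (p3 e)) <->
      (forall (c : IA) (x y : k), derived br y -> f3 (t3 c (wk x y)) = 0))).
Proof.
split; first exact: (cocycle_first_summandP HG HbrG1 HbrG2 HE two_unit HLA HSk HT1 Hp1a Hp1b).
split; first exact: (cocycle_second_summandP HG HbrG1 HbrG2 HE HLk HT2 Hp2a Hp2b).
exact: (cocycle_third_summandP HG HbrG1 HbrG2 HE two_unit HSA HmA1 HmA2 Hiota1 Hiota2 Hiota3
  HLk HT3 Hp3a Hp3b).
Qed.
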